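(* Let $G$ be a finite group with $s$ conjugacy classes, let $r\ge 2$ be a prime, and suppose exactly $d$ of the conjugacy classes of $G$ are not $r$-th powers, labeled so that $\mathcal{C}_1,\dots,\mathcal{C}_d$ are those not consisting of $r$-th powers and $\mathcal{C}_{d+1},\dots,\mathcal{C}_s$ are the rest. Let $g\in G\wr S_n$ have type $T(g)=(T(g)_{ij})_{s\times n}$. Then $g$ is an $r$-th power in $G\wr S_n$ if and only if $r\mid T(g)_{ij}$ whenever $r\mid j$ or $1\le i\le d$.
   Context: $G\wr S_n$ is the set of pairs $(f,\pi)$ with $f:\{1,\dots,n\}\to G$ and $\pi\in S_n$, with product $(f,\pi)(f',\pi')=(ff'_\pi,\pi\pi')$, $f'_\pi(i)=f'(\pi^{-1}(i))$, pointwise product of functions. For $(f,\pi)$ and a cycle $(j,\pi(j),\dots,\pi^t(j))$ of $\pi$, its cycle product is $f(j)f(\pi^{-1}(j))\cdots f(\pi^{-t}(j))$; its conjugacy class is independent of the starting point. The type $T(g)$ of $g=(f,\pi)$ is the $s\times n$ matrix whose $(i,k)$ entry is the number of $k$-cycles of $\pi$ whose cycle product lies in $\mathcal{C}_i$. A conjugacy class $\mathcal{C}$ of $G$ is an $r$-th power if $\mathcal{C}\subseteq\{x^r:x\in G\}$; an element $g$ of $G\wr S_n$ is an $r$-th power if $g=h^r$ for some $h\in G\wr S_n$. *)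

From mathcomp Require Import all_boot all_fingroup.
Set Implicit Arguments. Unset Strict Implicit. Unset Printing Implicit Defensive.
Local Open Scope group_scope.

Section Wreath.
Variables (gT : finGroupType) (n : nat).

Definition wr := ({ffun 'I_n -> gT} * {perm 'I_n})%type.

Definition wshift (f : {ffun 'I_n -> gT}) (p : {perm 'I_n}) : {ffun 'I_n -> gT} :=
  [ffun i => f (p^-1 i)].

(* (f,pi)(f',pi') = (f f'_pi, pi pi'), where pi pi' is the composition
   "first pi', then pi"; in MathComp's {perm} group this is pi' * pi. *)
Definition wmul (g h : wr) : wr :=
  ([ffun i => g.1 i * (wshift h.1 g.2) i], h.2 * g.2).

Definition wone : wr := ([ffun => 1], 1).

Fixpoint wpow (g : wr) (k : nat) : wr :=
  if k is k'.+1 then wmul g (wpow g k') else wone.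

Definition wr_rth_power (r : nat) (g : wr) : Prop := exists h : wr, wpow h r = g.

Definition cycle_prod (g : wr) (x : 'I_n) : gT :=
  \prod_(i < #|porbit g.2 x|) g.1 (((g.2)^-1 ^+ i)%g x).

Definition wtype (g : wr) (C : {set gT}) (k : nat) : nat :=
  #|[set O in porbits g.2 |
      (#|O| == k) && [exists x in O, cycle_prod g x \in C]]|.
End Wreath.

Definition class_rth_power (gT : finGroupType) (r : nat) (C : {set gT}) : bool :=
  C \subset [set x ^+ r | x in [set: gT]].

(* If g = h^r with h = (u, q), the permutation of g is q^r.  A cycle of q
   of length l is either a cycle of q^r, and then r does not divide l and the
   cycle product of g there is the r-th power of that of h, or it splits into
   r cycles of q^r of length l/r with conjugate cycle products of g.  Counting
   the cycles of q^r of each type gives the divisibility conditions.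
   Conversely, the conditions let us build an r-th root sigma of the
   permutation p of g: on a cycle of length prime to r whose cycle product is
   an r-th power, sigma is a power of p; the other cycles of each type come in
   multiples of r and are interleaved r at a time into single cycles of sigma.
   Putting the right element of G at one point of each cycle of sigma gives h
   such that h^r has permutation p and cycle products conjugate to those of g;
   two elements with the same permutation and pointwise conjugate cycle
   products are conjugate by an element of the base group. *)

From mathcomp Require Import all_boot all_fingroup.
Set Implicit Arguments. Unset Strict Implicit. Unset Printing Implicit Defensive.
Local Open Scope group_scope.

Section PermOrbits.
Variable T : finType.
Implicit Types (s p : {perm T}) (x y : T).

Lemma card_porbit_gt0 s x : 0 < #|porbit s x|.
Proof. by rewrite lt0n card_porbit_neq0. Qed.

Lemma porbit_eq s x y : y \in porbit s x -> porbit s y = porbit s x.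
Proof. by move=> yx; apply/eqP; rewrite eq_porbit_mem. Qed.

Lemma permX_modE s x k : (s ^+ k) x = (s ^+ (k %% #|porbit s x|)) x.
Proof.
have sx : (s ^+ #|porbit s x|) x = x by rewrite permX iter_porbit.
by rewrite {1}(divn_eq k #|porbit s x|) expgD permM mulnC expgM (permX_fix _ sx).
Qed.

Lemma eq_permX s x i k :
  ((s ^+ i) x == (s ^+ k) x) = (i == k %[mod #|porbit s x|]).
Proof.
rewrite (permX_modE s x i) (permX_modE s x k) !permX.
have lt_mod m : m %% #|porbit s x| < #|porbit s x| by rewrite ltn_pmod ?card_porbit_gt0.
rewrite -!(nth_traject _ (lt_mod _)).
by rewrite nth_uniq ?size_traject ?uniq_traject_porbit.
Qed.

Lemma permX_fixE s x k : ((s ^+ k) x == x) = (#|porbit s x| %| k).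
Proof. by rewrite -{2}(perm1 x) -(expg0 s) eq_permX mod0n. Qed.

Lemma permX_commute s p k x : commute s p -> (s ^+ k) (p x) = p ((s ^+ k) x).
Proof. by move=> sp; rewrite -permM (commuteX k (commute_sym sp)) permM. Qed.

Lemma card_porbits_uniform s (Y : {set T}) k :
  {in Y, forall x, s x \in Y} -> {in Y, forall x, #|porbit s x| = k} ->
  #|Y| = (k * #|porbit s @: Y|)%N.
Proof.
move=> sY kY.
have orbitY x : x \in Y -> porbit s x \subset Y.
  move=> xY; apply/subsetP=> _ /porbitP[i ->].
  by elim: i => [|i IH]; rewrite ?perm1 // expgSr permM sY.
have partY : partition (porbit s @: Y) Y.
  apply/and3P; split.
  - apply/eqP/setP=> y; apply/bigcupP/idP.
      by case=> _ /imsetP[x xY ->]; apply: (subsetP (orbitY x xY)).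
    by move=> yY; exists (porbit s y); rewrite ?imset_f ?porbit_id.
  - apply/trivIsetP=> _ _ /imsetP[x _ ->] /imsetP[z _ ->] neq.
    apply/pred0P=> y /=; apply/negbTE/negP=> /andP[yx yz].
    by move/negP: neq; apply; rewrite -(porbit_eq yx) -(porbit_eq yz).
  - by apply/imsetP=> -[x _ /setP/(_ x)]; rewrite porbit_id inE.
rewrite (card_partition partY) (eq_bigr (fun _ => k)) ?sum_nat_const 1?mulnC //.
by move=> _ /imsetP[x xY ->]; apply: kY.
Qed.

Lemma card_porbit_dvdP s x d : (forall k, ((s ^+ k) x == x) = (d %| k)) ->
  #|porbit s x| = d.
Proof.
move=> fixE; apply/eqP; rewrite eqn_dvd -fixE permX_fixE dvdnn /=.
by rewrite -permX_fixE fixE dvdnn.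
Qed.

Lemma card_porbit_commute s p x : commute s p ->
  #|porbit s (p x)| = #|porbit s x|.
Proof.
move=> sp; apply: card_porbit_dvdP => k.
by rewrite permX_commute // (inj_eq perm_inj) permX_fixE.
Qed.

Lemma card_porbitX_coprime s k x : coprime #|porbit s x| k ->
  #|porbit (s ^+ k) x| = #|porbit s x|.
Proof. by move=> co; apply: card_porbit_dvdP => m; rewrite -expgM permX_fixE Gauss_dvdr. Qed.

Lemma card_porbitX_dvd s k x : 0 < k -> k %| #|porbit s x| ->
  #|porbit (s ^+ k) x| = #|porbit s x| %/ k.
Proof.
move=> k_gt0 /divnK lE; apply: card_porbit_dvdP => m.
by rewrite -expgM permX_fixE -{1}lE mulnC dvdn_pmul2l.
Qed.

Definition porbit_rep s x := odflt x [pick z in porbit s x].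

Lemma porbit_rep_mem s x : porbit_rep s x \in porbit s x.
Proof. by rewrite /porbit_rep; case: pickP => //= _; rewrite porbit_id. Qed.

Lemma porbit_rep_eq s x y : y \in porbit s x -> porbit_rep s y = porbit_rep s x.
Proof.
move=> yx; rewrite /porbit_rep (porbit_eq yx).
by case: pickP => //= /(_ x); rewrite porbit_id.
Qed.

Lemma porbit_rep_id s x : porbit_rep s (porbit_rep s x) = porbit_rep s x.
Proof. exact/porbit_rep_eq/porbit_rep_mem. Qed.

Definition porbit_index s b x := index x (traject s b #|porbit s b|).

Lemma porbit_indexK s b x : x \in porbit s b -> (s ^+ porbit_index s b x) b = x.
Proof.
move=> xb; have xt : x \in traject s b #|porbit s b| by rewrite -porbit_traject.
have lt_ix : porbit_index s b x < #|porbit s b|.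
  by rewrite /porbit_index -{2}(size_traject s b #|porbit s b|) index_mem.
by rewrite permX -(nth_traject s lt_ix) nth_index.
Qed.

Lemma permX_porbit_index s a b m k : #|porbit s a| = #|porbit s b| ->
  (s ^+ (porbit_index s a ((s ^+ m) a) + k)) b = (s ^+ (m + k)) b.
Proof.
move=> ab; apply/eqP; rewrite eq_permX -ab eqn_modDr -eq_permX.
by rewrite porbit_indexK ?mem_porbit.
Qed.

End PermOrbits.

Section Classes.
Variable gT : finGroupType.

Lemma classes_trans (C : {set gT}) a c :
  C \in classes [set: gT] -> c \in C -> a \in c ^: [set: gT] -> a \in C.
Proof. by case/imsetP=> b _ -> cb ac; apply: class_trans cb. Qed.

Definition rth_powers r := [set x ^+ r | x in [set: gT]].

Lemma class_rth_powerE r (x : gT) :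
  class_rth_power r (x ^: [set: gT]) = (x \in rth_powers r).
Proof.
apply/idP/idP => [/subsetP-> //|]; first exact: class_refl.
case/imsetP=> t _ ->; apply/subsetP=> _ /imsetP[w _ ->].
by rewrite conjXg; apply/imsetP; exists (t ^ w); rewrite ?inE.
Qed.

Lemma rth_powers_class r (x y : gT) :
  x \in y ^: [set: gT] -> (x \in rth_powers r) = (y \in rth_powers r).
Proof. by move/class_eqP => e; rewrite -!class_rth_powerE e. Qed.

Definition rth_root r (x : gT) := odflt 1 [pick z | z ^+ r == x].

Lemma rth_rootK r x : x \in rth_powers r -> rth_root r x ^+ r = x.
Proof.
rewrite /rth_root; case: pickP => [z /eqP //|none] /imsetP[z _ xE].
by have := none z; rewrite xE eqxx.
Qed.

End Classes.
Arguments rth_powers {gT} r.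

Section WreathPowers.
Variables (gT : finGroupType) (n : nat).
Implicit Types (g h : wr gT n).

Lemma wmulA g h (k : wr gT n) : wmul (wmul g h) k = wmul g (wmul h k).
Proof.
rewrite /wmul /=; congr pair; last by rewrite mulgA.
by apply/ffunP=> i; rewrite /wshift !ffunE -mulgA invMg permM.
Qed.

Lemma wpow_perm g k : (wpow g k).2 = g.2 ^+ k.
Proof. by elim: k => [|k IH] //=; rewrite IH expgSr. Qed.

Lemma wpowS_ffun g k x : (wpow g k.+1).1 x = g.1 x * (wpow g k).1 (g.2^-1 x).
Proof. by rewrite /= /wmul /wshift /= !ffunE. Qed.

Lemma wpow_ffun g k x : (wpow g k).1 x = \prod_(i < k) g.1 ((g.2^-1 ^+ i) x).
Proof.
elim: k x => [|k IH] x; first by rewrite big_ord0 /= ffunE.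
rewrite wpowS_ffun IH big_ord_recl expg0 perm1; congr (_ * _).
by apply: eq_bigr => i _; rewrite expgS permM.
Qed.

Lemma cycle_prodE g x : cycle_prod g x = (wpow g #|porbit g.2 x|).1 x.
Proof. by rewrite wpow_ffun. Qed.

Lemma wpowD g a b : wpow g (a + b) = wmul (wpow g a) (wpow g b).
Proof.
elim: a => [|a IH] /=; last by rewrite IH wmulA.
rewrite /wmul /wone /=; case: (wpow g b) => f p /=; congr pair; last by rewrite mulg1.
by apply/ffunP=> i; rewrite /wshift !ffunE invg1 perm1 mul1g.
Qed.

Lemma wpowM g a b : wpow g (a * b) = wpow (wpow g a) b.
Proof. by elim: b => [|b IH]; rewrite ?muln0 // mulnS wpowD IH. Qed.

Lemma wpow_ffun_fixed g m y : g.2 y = y -> (wpow g m).1 y = g.1 y ^+ m.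
Proof.
move=> gy; have gVy : g.2^-1 y = y by rewrite -{1}gy permK.
by elim: m => [|m IH]; [rewrite ffunE | rewrite wpowS_ffun gVy IH expgS].
Qed.

Lemma wpowD_cycle_ffun g k x : (wpow g (k + #|porbit g.2 x|)).1 ((g.2 ^+ k) x)
  = (wpow g k).1 ((g.2 ^+ k) x) * cycle_prod g x.
Proof. by rewrite wpowD /wmul /wshift /= !ffunE wpow_perm permK cycle_prodE. Qed.

(* Computing [(wpow g N.+1).1 (g.2 y)] by peeling off the first or the last
   factor shows that it moves along the orbit by conjugation. *)
Lemma wpow_ffun_next g N y : (g.2 ^+ N) y = y ->
  (wpow g N).1 (g.2 y) = (wpow g N).1 y ^ (g.1 (g.2 y))^-1.
Proof.
move=> fixy.
have first : (wpow g N.+1).1 (g.2 y) = g.1 (g.2 y) * (wpow g N).1 y.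
  by rewrite wpowS_ffun permK.
have last : (wpow g N.+1).1 (g.2 y) = (wpow g N).1 (g.2 y) * g.1 (g.2 y).
  rewrite -addn1 wpowD /wmul /wshift /= !ffunE wpow_perm.
  have -> : (g.2 ^+ N)^-1 (g.2 y) = g.2 y.
    by apply: (@perm_inj _ (g.2 ^+ N)); rewrite permKV -permM -expgS expgSr permM fixy.
  by rewrite /= mulg1.
by rewrite /conjg invgK; apply: (mulIg (g.1 (g.2 y))); rewrite mulgA mulgKV -last first.
Qed.

Lemma wpow_ffun_orbit g N y i : (g.2 ^+ N) y = y ->
  (wpow g N).1 ((g.2 ^+ i) y) \in (wpow g N).1 y ^: [set: gT].
Proof.
move=> fixy; elim: i => [|i IH]; first by rewrite perm1 class_refl.
have fixz : (g.2 ^+ N) ((g.2 ^+ i) y) = (g.2 ^+ i) y.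
  by rewrite -permM -expgD addnC expgD permM fixy.
by rewrite expgSr permM wpow_ffun_next // (class_trans _ IH) ?memJ_class ?inE.
Qed.

Lemma cycle_prod_orbit g x y : y \in porbit g.2 x ->
  cycle_prod g y \in cycle_prod g x ^: [set: gT].
Proof.
move=> yx; rewrite !cycle_prodE (porbit_eq yx).
by case/porbitP: yx => i ->; apply: wpow_ffun_orbit; apply/eqP; rewrite permX_fixE.
Qed.

End WreathPowers.

Section WreathType.
Variables (gT : finGroupType) (n : nat).
Implicit Types (g h : wr gT n) (C : {set gT}).

Lemma wtypeE g C j : C \in classes [set: gT] -> wtype g C j =
  #|porbit g.2 @: [set x | (#|porbit g.2 x| == j) && (cycle_prod g x \in C)]|.
Proof.
move=> CG; apply: eq_card => O; rewrite inE; apply/andP/imsetP.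
  case=> /imsetP[x _ ->] /andP[jx /existsP[y /andP[yx yC]]]; exists x => //.
  rewrite inE jx (classes_trans CG yC) // cycle_prod_orbit //.
  by rewrite porbit_sym.
case=> x; rewrite inE => /andP[jx xC] ->; split; first exact: imset_f.
by rewrite jx; apply/existsP; exists x; rewrite porbit_id.
Qed.

Lemma cycle_prod_wpow h r x q :
  (#|porbit h.2 x| * q = r * #|porbit (h.2 ^+ r) x|)%N ->
  cycle_prod (wpow h r) x = cycle_prod h x ^+ q.
Proof.
move=> lE; rewrite !cycle_prodE wpow_perm -wpowM -lE wpowM wpow_ffun_fixed //.
by rewrite wpow_perm; apply/eqP; rewrite permX_fixE.
Qed.

Lemma cycle_prod_wpow_perm h r x :
  cycle_prod (wpow h r) (h.2 x) \in cycle_prod (wpow h r) x ^: [set: gT].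
Proof.
have cp_r : commute (h.2 ^+ r) h.2 by apply/commute_sym/commuteX.
rewrite !cycle_prodE wpow_perm card_porbit_commute // -!wpowM wpow_ffun_next.
  by rewrite memJ_class ?inE.
by rewrite expgM; apply/eqP; rewrite permX_fixE.
Qed.

Lemma wtype_wpow_dvd h r C j : prime r -> C \in classes [set: gT] -> 0 < j ->
  (r %| j) || ~~ class_rth_power r C -> r %| wtype (wpow h r) C j.
Proof.
move=> r_pr CG j_gt0 jC; set g := wpow h r; set q := h.2.
have gq : g.2 = q ^+ r by rewrite wpow_perm.
rewrite wtypeE // gq.
set Y := [set x | _].
have cq : commute (q ^+ r) q by apply/commute_sym/commuteX.
have qY : {in Y, forall x, q x \in Y}.
  move=> x; rewrite !inE card_porbit_commute // => /andP[-> xC].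
  by rewrite (classes_trans CG xC) ?cycle_prod_wpow_perm.
have qkY k : {in Y, forall x, (q ^+ k) x \in Y}.
  by elim: k => [|k IH] x xY; rewrite ?perm1 // expgSr permM qY ?IH.
have jY : {in Y, forall x, #|porbit (q ^+ r) x| = j}.
  by move=> x; rewrite inE => /andP[/eqP].
have rjY : {in Y, forall x, #|porbit q x| = (r * j)%N}.
  move=> x xY; have := xY; rewrite inE => /andP[/eqP jx xC].
  have [r_l | r'l] := boolP (r %| #|porbit q x|).
    by rewrite -jx card_porbitX_dvd ?prime_gt0 // mulnC divnK.
  have lj : #|porbit q x| = j by rewrite -jx card_porbitX_coprime // coprime_sym prime_coprime.
  have r'j : ~~ (r %| j) by rewrite -lj.
  have CE : C = cycle_prod g x ^: [set: gT] by case/imsetP: CG xC => c _ -> /class_eqP.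
  rewrite (negbTE r'j) CE class_rth_powerE /= in jC.
  rewrite (@cycle_prod_wpow _ _ _ r) ?jx ?lj 1?mulnC // in jC.
  by case/negP: jC; apply/imsetP; exists (cycle_prod h x); rewrite ?inE.
have := card_porbits_uniform (qkY r) jY; rewrite (card_porbits_uniform qY rjY).
by rewrite mulnAC mulnC => /eqP; rewrite eqn_pmul2l // => /eqP <-; rewrite dvdn_mulr.
Qed.

End WreathType.

Section WreathConjugation.
Variables (gT : finGroupType) (n : nat).
Implicit Types (g h : wr gT n) (u : {ffun 'I_n -> gT}).

Definition wconj u g : wr gT n :=
  ([ffun y => u y * g.1 y * (u (g.2^-1 y))^-1], g.2).

Lemma wpow_wconj u g k : wpow (wconj u g) k = wconj u (wpow g k).
Proof.
elim: k => [|k IH]; rewrite /wconj /=.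
  by congr pair; apply/ffunP=> y; rewrite !ffunE invg1 perm1 mulg1 mulgV.
rewrite IH /wmul /wshift /=; congr pair; apply/ffunP=> y; rewrite !ffunE /=.
by rewrite wpow_perm invMg permM !mulgA mulgKV.
Qed.

Lemma wr_rth_power_wconj r u g : wr_rth_power r g -> wr_rth_power r (wconj u g).
Proof. by case=> h <-; exists (wconj u h); rewrite wpow_wconj. Qed.

Section Transporter.
Variables (f c : {ffun 'I_n -> gT}) (p : {perm 'I_n}) (w : 'I_n -> gT).
Hypothesis cycle_prod_conj : forall b, cycle_prod (f, p) b = cycle_prod (c, p) b ^ w b.

(* The value at [p^k b] of the conjugating function, normalised by [w b] at [b];
   [cycle_prod_conj] makes it well defined modulo the length of the orbit. *)
Definition transporter b k :=
  (wpow (f, p) k).1 ((p ^+ k) b) * (w b)^-1 * ((wpow (c, p) k).1 ((p ^+ k) b))^-1.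

Lemma transporter_period b k :
  transporter b (k + #|porbit p b|) = transporter b k.
Proof.
have fixb : (p ^+ #|porbit p b|) b = b by apply/eqP; rewrite permX_fixE.
rewrite /transporter addnC expgD permM fixb addnC.
rewrite (wpowD_cycle_ffun (f, p)) (wpowD_cycle_ffun (c, p)) cycle_prod_conj /conjg.
by rewrite !invMg !mulgA mulgK mulgK.
Qed.

Lemma transporter_eq b k k' : (p ^+ k) b = (p ^+ k') b ->
  transporter b k = transporter b k'.
Proof.
have modE m : transporter b m = transporter b (m %% #|porbit p b|).
  rewrite {1}(divn_eq m #|porbit p b|) addnC.
  by elim: (m %/ _) => [|d IH]; rewrite ?addn0 // mulSnr addnA transporter_period.
by move/eqP; rewrite eq_permX => /eqP e; rewrite modE e -modE.
Qed.

Lemma transporterS b k :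
  transporter b k.+1 = f ((p ^+ k.+1) b) * transporter b k * (c ((p ^+ k.+1) b))^-1.
Proof. by rewrite /transporter !wpowS_ffun /= expgSr permM permK !invMg !mulgA. Qed.

Definition transporter_fun : {ffun 'I_n -> gT} :=
  [ffun x => transporter (porbit_rep p x) (porbit_index p (porbit_rep p x) x)].

Lemma transporter_funE b k :
  transporter_fun ((p ^+ k) (porbit_rep p b)) = transporter (porbit_rep p b) k.
Proof.
rewrite ffunE (porbit_rep_eq (mem_porbit _ _ _)) porbit_rep_id.
by apply: transporter_eq; rewrite porbit_indexK ?mem_porbit.
Qed.

Lemma transporter_funK : (f, p) = wconj transporter_fun (c, p).
Proof.
congr pair; apply/ffunP=> x; rewrite ffunE /=.
set b := porbit_rep p x.
have /porbitP[i xE] : x \in porbit p b by rewrite porbit_sym porbit_rep_mem.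
set k := i + (#|porbit p b|).-1.
have xk : (p ^+ k.+1) b = x.
  rewrite xE; apply/eqP; rewrite eq_permX -addnS prednK ?card_porbit_gt0 //.
  by rewrite modnDr.
have pVxk : (p ^+ k) b = p^-1 x by rewrite -xk expgSr permM permK.
by rewrite -{2 3}xk -pVxk !transporter_funE transporterS xk mulgKV mulgK.
Qed.

End Transporter.

Lemma wconj_of_cycle_prod_class (f c : {ffun 'I_n -> gT}) (p : {perm 'I_n}) :
  (forall x, cycle_prod (f, p) x \in cycle_prod (c, p) x ^: [set: gT]) ->
  exists u, (f, p) = wconj u (c, p).
Proof.
move=> fc.
have /fin_all_exists[w fcw] b : exists v, cycle_prod (f, p) b = cycle_prod (c, p) b ^ v.
  by case/imsetP: (fc b) => v _ ->; exists v.
by exists (transporter_fun f c p w); apply: transporter_funK.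
Qed.

End WreathConjugation.

Section CompatibleRoot.
Variables (gT : finGroupType) (n : nat).

Lemma cycle_prod_rep_supported (psi : {ffun 'I_n -> gT}) s x :
  (forall y, porbit_rep s y != y -> psi y = 1) ->
  cycle_prod (psi, s) x \in psi (porbit_rep s x) ^: [set: gT].
Proof.
move=> psi1; set b := porbit_rep s x.
suff <- : cycle_prod (psi, s) b = psi b.
  by rewrite cycle_prod_orbit // porbit_sym porbit_rep_mem.
rewrite /cycle_prod /=.
case E: #|porbit s b| => [|L]; first by move: (card_porbit_gt0 s b); rewrite E.
rewrite big_ord_recl expg0 perm1 big1 ?mulg1 // => i _; apply: psi1.
have bi : ((s^-1) ^+ (bump 0 i)) b \in porbit s b by rewrite -porbitV mem_porbit.
rewrite (porbit_rep_eq bi) porbit_rep_id eq_sym permX_fixE porbitV E.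
by apply/negP; rewrite lift0 => /(dvdn_leq (ltn0Sn _)); rewrite ltnS leqNgt ltn_ord.
Qed.

Lemma wr_rth_power_of_cycle_prod_class r (g h : wr gT n) :
  (wpow h r).2 = g.2 ->
  (forall x, cycle_prod g x \in cycle_prod (wpow h r) x ^: [set: gT]) ->
  wr_rth_power r g.
Proof.
case: g => f p /= hr cp_class.
have hE : ((wpow h r).1, p) = wpow h r by rewrite -hr -surjective_pairing.
have [u ->] : exists u, (f, p) = wconj u ((wpow h r).1, p).
  by apply: wconj_of_cycle_prod_class => x; rewrite hE.
by rewrite hE; apply: wr_rth_power_wconj; exists h.
Qed.

Definition compatible_root r (g : wr gT n) (s : {perm 'I_n}) x : Prop :=
  (porbit s x = porbit g.2 x /\ cycle_prod g x \in rth_powers r) \/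
  (#|porbit s x| = (r * #|porbit g.2 x|)%N /\
   {in porbit s x, forall y, cycle_prod g y \in cycle_prod g x ^: [set: gT]}).

Lemma wr_rth_power_of_compatible_root r (g : wr gT n) (s : {perm 'I_n}) :
  1 < r -> s ^+ r = g.2 -> (forall x, compatible_root r g s x) ->
  wr_rth_power r g.
Proof.
case: g => f p /= r_gt1 sr compat; pose cp := cycle_prod (f, p).
pose val b := if #|porbit s b| == #|porbit p b| then rth_root r (cp b) else cp b.
pose h : wr gT n := ([ffun x => if porbit_rep s x == x then val x else 1], s).
apply: (@wr_rth_power_of_cycle_prod_class _ _ h); first by rewrite wpow_perm sr.
move=> x; set b := porbit_rep s x.
have hx : cycle_prod h x \in val b ^: [set: gT].
  have <- : h.1 b = val b by rewrite ffunE porbit_rep_id eqxx.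
  by apply: (@cycle_prod_rep_supported h.1) => y; rewrite ffunE => /negbTE->.
have [q Lq] : exists q, (#|porbit s x| * q = r * #|porbit p x|)%N.
  have : #|porbit s x| %| r * #|porbit p x|.
    by rewrite -permX_fixE expgM sr permX_fixE.
  by case/dvdnP=> q ->; exists q; rewrite mulnC.
rewrite (@cycle_prod_wpow _ _ _ _ _ q) ?sr // -/cp.
have bE : porbit s b = porbit s x by apply/porbit_eq/porbit_rep_mem.
case: (compat x) => /= [[sp x_pow] | [sL x_cls]].
  have qr : q = r.
    by apply/eqP; rewrite -(eqn_pmul2l (card_porbit_gt0 s x)) Lq sp mulnC.
  have bp : b \in porbit p x by rewrite -sp porbit_rep_mem.
  have cpb : cp b \in cp x ^: [set: gT] by apply: cycle_prod_orbit.
  have vb : val b ^+ r = cp b.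
    rewrite /val bE sp (porbit_eq bp) eqxx rth_rootK //.
    by rewrite (rth_powers_class _ cpb).
  case/imsetP: hx => v _ ->.
  by rewrite qr -conjXg vb classGidl ?inE // class_sym.
have q1 : q = 1%N.
  by apply/eqP; rewrite -(eqn_pmul2l (card_porbit_gt0 s x)) Lq sL muln1.
have vb : val b = cp b.
  have [i ->] : exists i, b = (s ^+ i) x by apply/porbitP/porbit_rep_mem.
  have ps : commute p (s ^+ i) by rewrite -sr; apply: commuteX2.
  rewrite /val porbit_perm card_porbit_commute //.
  rewrite sL -{2}(mul1n #|porbit p x|) eqn_pmul2r ?card_porbit_gt0 //.
  by rewrite (gtn_eqF r_gt1).
by rewrite q1 expg1 class_sym (class_trans hx) // vb x_cls ?porbit_rep_mem.
Qed.

End CompatibleRoot.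

Section RootConstruction.
Variables (gT : finGroupType) (n : nat).
Variables (f : {ffun 'I_n -> gT}) (p : {perm 'I_n}) (r : nat).
Hypothesis r_prime : prime r.
Hypothesis wtype_dvd : forall C, C \in classes [set: gT] -> forall j, 1 <= j <= n ->
  (r %| j) || ~~ class_rth_power r C -> r %| wtype (f, p) C j.

Let r_gt0 : 0 < r. Proof. exact: prime_gt0. Qed.

Definition cycle_key x := (#|porbit p x|, cycle_prod (f, p) x ^: [set: gT]).

Definition good_key (k : nat * {set gT}) := ~~ (r %| k.1) && class_rth_power r k.2.

Definition key_reps k := enum [set b | (porbit_rep p b == b) && (cycle_key b == k)].

Lemma cycle_key_orbit x y : y \in porbit p x -> cycle_key y = cycle_key x.
Proof.
move=> yx; rewrite /cycle_key (porbit_eq yx); congr pair.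
exact/class_eqP/cycle_prod_orbit.
Qed.

Lemma mem_key_reps k b :
  (b \in key_reps k) = (porbit_rep p b == b) && (cycle_key b == k).
Proof. by rewrite mem_enum inE. Qed.

Lemma rep_key_reps y : porbit_rep p y \in key_reps (cycle_key y).
Proof.
by rewrite mem_key_reps porbit_rep_id (cycle_key_orbit (porbit_rep_mem p y)) !eqxx.
Qed.

Lemma size_key_reps y : size (key_reps (cycle_key y)) =
  wtype (f, p) (cycle_prod (f, p) y ^: [set: gT]) #|porbit p y|.
Proof.
rewrite -cardE wtypeE ?mem_classes ?inE //=.
set B := [set b | _]; set Y := [set x | _].
have -> : porbit p @: Y = porbit p @: B.
  apply/setP=> O; apply/imsetP/imsetP => -[x]; rewrite inE.
    move=> /andP[/eqP lx /class_eqP cx] ->; exists (porbit_rep p x).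
      rewrite inE porbit_rep_id (cycle_key_orbit (porbit_rep_mem p x)).
      by rewrite /cycle_key lx cx !eqxx.
    by rewrite (porbit_eq (porbit_rep_mem p x)).
  move=> /andP[_ /eqP[lx cx]] ->; exists x => //.
  by rewrite inE lx eqxx /= -cx class_refl.
rewrite card_in_imset // => b b'; rewrite !inE => /andP[/eqP bb _] /andP[/eqP bb' _] e.
by rewrite -bb -bb' (@porbit_rep_eq _ _ b') // -e porbit_id.
Qed.

Lemma bad_key_reps_dvd y :
  ~~ good_key (cycle_key y) -> r %| size (key_reps (cycle_key y)).
Proof.
move=> bad; rewrite size_key_reps; apply: wtype_dvd; first exact: mem_classes.
  by rewrite card_porbit_gt0 (leq_trans (max_card _)) ?card_ord.
by move: bad; rewrite negb_and negbK.
Qed.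

Definition rep_index y := index (porbit_rep p y) (key_reps (cycle_key y)).

Definition block_rep y i :=
  nth y (key_reps (cycle_key y)) (r * (rep_index y %/ r) + i)%N.

Definition next_pos i := if i == r.-1 then 0 else i.+1.

Definition inv_mod l := (egcdn r l).1.

(* On a cycle of good key, [p] has the r-th root [p ^+ inv_mod l]; the cycles
   of a bad key are grouped in blocks of [r] consecutive representatives and
   interleaved into a single cycle, wrapping around with one extra [p]. *)
Definition root_fun y :=
  if good_key (cycle_key y) then (p ^+ inv_mod #|porbit p y|) y
  else (p ^+ (porbit_index p (porbit_rep p y) y + (rep_index y %% r == r.-1)))
         (block_rep y (next_pos (rep_index y %% r))).

Lemma next_pos_lt i : i < r -> next_pos i < r.
Proof.
rewrite /next_pos; case: eqP => // /eqP ne ir.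
by rewrite ltn_neqAle ir andbT; apply: contra ne => /eqP <-.
Qed.

Section BadKey.
Variable y : 'I_n.
Hypothesis bad : ~~ good_key (cycle_key y).
Local Notation reps := (key_reps (cycle_key y)).
Local Notation block := (r * (rep_index y %/ r))%N.

Lemma block_lt i : i < r -> block + i < size reps.
Proof.
move=> ir; have /dvdnP[d sizeE] := bad_key_reps_dvd bad.
have : rep_index y < size reps by rewrite index_mem rep_key_reps.
rewrite sizeE -ltn_divLR // => lt_block.
apply: (@leq_trans (r * (rep_index y %/ r).+1)%N); first by rewrite mulnS addnC ltn_add2r.
by rewrite mulnC leq_mul2r lt_block orbT.
Qed.

Lemma block_rep_mem i : i < r -> block_rep y i \in reps.
Proof. by move=> ir; rewrite mem_nth // block_lt. Qed.

Lemma block_rep_rep i : i < r -> porbit_rep p (block_rep y i) = block_rep y i.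
Proof. by move/block_rep_mem; rewrite mem_key_reps => /andP[/eqP]. Qed.

Lemma block_rep_key i : i < r -> cycle_key (block_rep y i) = cycle_key y.
Proof. by move/block_rep_mem; rewrite mem_key_reps => /andP[_ /eqP]. Qed.

Lemma card_porbit_block_rep i : i < r ->
  #|porbit p (block_rep y i)| = #|porbit p y|.
Proof. by move/block_rep_key => [->]. Qed.

Lemma block_rep_pos : block_rep y (rep_index y %% r) = porbit_rep p y.
Proof. by rewrite /block_rep mulnC -divn_eq nth_index // rep_key_reps. Qed.

Lemma index_block_rep i : i < r -> index (block_rep y i) reps = block + i.
Proof. by move=> ir; rewrite index_uniq ?enum_uniq ?block_lt. Qed.

Lemma block_rep_inj i j : i < r -> j < r ->
  block_rep y i \in porbit p (block_rep y j) -> i = j.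
Proof.
move=> ir jr /porbit_rep_eq; rewrite !block_rep_rep // => /(congr1 (index^~ reps)).
by rewrite !index_block_rep // => /addnI.
Qed.

Lemma block_orbit i z : i < r -> z \in porbit p (block_rep y i) ->
  [/\ cycle_key z = cycle_key y, rep_index z %% r = i, porbit_rep p z = block_rep y i
    & forall j, j < r -> block_rep z j = block_rep y j].
Proof.
move=> ir zi.
have kz : cycle_key z = cycle_key y by rewrite (cycle_key_orbit zi) block_rep_key.
have rz : porbit_rep p z = block_rep y i by rewrite (porbit_rep_eq zi) block_rep_rep.
have iz : rep_index z = block + i by rewrite /rep_index kz rz index_block_rep.
split=> // [|j jr]; first by rewrite iz mulnC modnMDl modn_small.
have qE : (block + i) %/ r = rep_index y %/ r.
  by rewrite mulnC divnMDl // (divn_small ir) addn0.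
by rewrite /block_rep kz iz qE; apply: set_nth_default; rewrite block_lt.
Qed.

Lemma root_fun_step i m : i < r -> root_fun ((p ^+ m) (block_rep y i)) =
  (p ^+ (m + (i == r.-1))) (block_rep y (next_pos i)).
Proof.
move=> ir; have [kz iz rz ez] := block_orbit ir (mem_porbit p m (block_rep y i)).
rewrite /root_fun kz (negbTE bad) iz rz ez ?next_pos_lt //.
by rewrite permX_porbit_index // !card_porbit_block_rep ?next_pos_lt.
Qed.

Lemma iter_root_fun_lt i m : i < r ->
  iter i root_fun ((p ^+ m) (block_rep y 0)) = (p ^+ m) (block_rep y i).
Proof.
elim: i => [|i IH] ir //; have ne : i != r.-1 by rewrite neq_ltn ltn_predRL ir.
rewrite iterS IH ?(ltnW ir) // root_fun_step ?(ltnW ir) //.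
by rewrite (negbTE ne) addn0 /next_pos (negbTE ne).
Qed.

Lemma iter_root_fun a i m : i < r ->
  iter (r * a + i) root_fun ((p ^+ m) (block_rep y 0)) = (p ^+ (m + a)) (block_rep y i).
Proof.
have step m' : iter r root_fun ((p ^+ m') (block_rep y 0)) = (p ^+ m'.+1) (block_rep y 0).
  rewrite -{1}(prednK r_gt0) iterS iter_root_fun_lt ?ltn_predL //.
  by rewrite root_fun_step ?ltn_predL // eqxx addn1 /next_pos eqxx.
elim: a m => [|a IH] m ir; first by rewrite muln0 add0n addn0 iter_root_fun_lt.
by rewrite mulnS -addnA addnC iterD step IH // addSnnS.
Qed.

Lemma permX_block_rep_pos :
  (p ^+ porbit_index p (porbit_rep p y) y) (block_rep y (rep_index y %% r)) = y.
Proof. by rewrite block_rep_pos porbit_indexK // porbit_sym porbit_rep_mem. Qed.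

Lemma iter_root_fun_rep :
  iter (r * porbit_index p (porbit_rep p y) y + rep_index y %% r) root_fun
       (block_rep y 0) = y.
Proof.
rewrite -{1}(perm1 (block_rep y 0)) -(expg0 p) iter_root_fun ?ltn_pmod //.
exact: permX_block_rep_pos.
Qed.

Lemma iter_root_fun_bad : iter r root_fun y = p y.
Proof.
rewrite -{1}permX_block_rep_pos -iter_root_fun_lt ?ltn_pmod // -iterD -{1}(muln1 r).
by rewrite iter_root_fun ?ltn_pmod // addn1 expgSr permM permX_block_rep_pos.
Qed.

Lemma iter_root_fun_fixE j :
  (iter j root_fun (block_rep y 0) == block_rep y 0) = (r * #|porbit p y| %| j).
Proof.
have := iter_root_fun (j %/ r) 0 (ltn_pmod j r_gt0).
rewrite expg0 perm1 add0n mulnC -divn_eq => ->.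
have [r_j | r'j] := boolP (r %| j).
  rewrite (eqP r_j) permX_fixE card_porbit_block_rep // -{2}(divnK r_j) mulnC.
  by rewrite dvdn_pmul2r.
have -> : (r * #|porbit p y| %| j) = false.
  by apply: contraNF r'j; apply: dvdn_trans; apply: dvdn_mulr.
apply/negP=> /eqP fix0.
have : block_rep y 0 \in porbit p (block_rep y (j %% r)) by rewrite -fix0 mem_porbit.
by move/block_rep_inj=> /(_ r_gt0 (ltn_pmod j r_gt0)) j0; rewrite /dvdn -j0 in r'j.
Qed.

End BadKey.

Lemma inv_modP l : ~~ (r %| l) -> inv_mod l * r = 1 %[mod l].
Proof.
move=> r'l; rewrite /inv_mod; case: (egcdnP l r_gt0) => km kn -> _ /=.
have : coprime r l by rewrite prime_coprime.
by rewrite /coprime => /eqP ->; rewrite modnMDl.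
Qed.

Lemma iter_root_fun_good y j : good_key (cycle_key y) ->
  iter j root_fun y = (p ^+ (inv_mod #|porbit p y| * j)) y.
Proof.
move=> good; elim: j => [|j IH]; first by rewrite muln0 expg0 perm1.
have yj : (p ^+ (inv_mod #|porbit p y| * j)) y \in porbit p y by apply: mem_porbit.
rewrite iterS IH /root_fun (cycle_key_orbit yj) good (porbit_eq yj).
by rewrite -permM -expgD mulnS addnC.
Qed.

Lemma iter_root_fun_r y : iter r root_fun y = p y.
Proof.
have [good | bad] := boolP (good_key (cycle_key y)); last exact: iter_root_fun_bad.
rewrite iter_root_fun_good // -[p y]/((p ^+ 1) y); apply/eqP; rewrite eq_permX.
by apply/eqP/inv_modP; case/andP: good.
Qed.

Lemma cycle_key_root_fun y : cycle_key (root_fun y) = cycle_key y.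
Proof.
have [good | bad] := boolP (good_key (cycle_key y)).
  by rewrite /root_fun good; apply/cycle_key_orbit/mem_porbit.
rewrite -{1}(permX_block_rep_pos y) (root_fun_step bad) ?ltn_pmod //.
by rewrite (cycle_key_orbit (mem_porbit _ _ _)) block_rep_key ?next_pos_lt ?ltn_pmod.
Qed.

Lemma cycle_key_iter j y : cycle_key (iter j root_fun y) = cycle_key y.
Proof. by elim: j => [|j IH] //; rewrite iterS cycle_key_root_fun. Qed.

Lemma root_fun_inj : injective root_fun.
Proof.
move=> y z e; apply: (@perm_inj _ p).
by rewrite -!iter_root_fun_r -(prednK r_gt0) !iterSr e.
Qed.

Definition perm_root := perm root_fun_inj.

Lemma perm_rootX j y : (perm_root ^+ j) y = iter j root_fun y.
Proof. by rewrite permX; apply: eq_iter; apply: permE. Qed.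

Lemma perm_root_r : perm_root ^+ r = p.
Proof. by apply/permP=> y; rewrite perm_rootX iter_root_fun_r. Qed.

Lemma compatible_perm_root x : compatible_root r (f, p) perm_root x.
Proof.
have [good | bad] := boolP (good_key (cycle_key x)).
  left; split; last by rewrite -class_rth_powerE; case/andP: good.
  apply/setP=> y; apply/porbitP/porbitP => -[i ->].
    by exists (inv_mod #|porbit p x| * i)%N; rewrite perm_rootX iter_root_fun_good.
  by exists (r * i)%N; rewrite expgM perm_root_r.
right; split=> [|_ /porbitP[j ->]] /=; last first.
  rewrite perm_rootX; case: (cycle_key_iter j x) => _ <-; exact: class_refl.
have x0 : x \in porbit perm_root (block_rep x 0).
  by apply/porbitP; eexists; rewrite perm_rootX; exact/esym/(iter_root_fun_rep bad).
rewrite (porbit_eq x0); apply: card_porbit_dvdP => j.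
by rewrite perm_rootX iter_root_fun_fixE.
Qed.

End RootConstruction.

Theorem proposition4p3 (gT : finGroupType) (n r : nat) (g : wr gT n) :
  prime r ->
  (wr_rth_power r g <->
   (forall C, C \in classes [set: gT] -> forall j, 1 <= j <= n ->
      (r %| j) || ~~ class_rth_power r C -> r %| wtype g C j)).
Proof.
move=> r_prime; split=> [[h <-] C CG j /andP[j_gt0 _] | wtype_dvd].
  exact: wtype_wpow_dvd.
case: g wtype_dvd => f p wtype_dvd.
apply: (@wr_rth_power_of_compatible_root _ _ _ _ (perm_root r_prime wtype_dvd)).
- exact: prime_gt1.
- exact: perm_root_r.
- exact: compatible_perm_root.
Qed.
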